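(* Let $k$ be an integer and let $G$ be a finite graph (parallel edges allowed, no loops) with $\Delta(G)\le k$. Then $\Gamma(G)\le k$ if and only if $2|E(G[U])|\le k(|U|-1)$ for every set $U\subseteq V(G)$ such that $|U|$ is odd, $|U|\ge 3$, and the underlying simple graph of $G[U]$ has no vertices of degree at most one.
   Context: $\Delta(G)$ is the maximum degree of $G$ (counting parallel edges with multiplicity). $G[U]$ is the subgraph induced by $U$, and $|E(G[U])|$ counts edges with multiplicity. $\Gamma(G)=\max\{2|E(G[U])|/(|U|-1): U\subseteq V(G),\ |U|\ge 3,\ |U| \text{ odd}\}$. The underlying simple graph of a graph is obtained by replacing each class of parallel edges by a single edge. *)

(* A finite multigraph (parallel edges allowed) is given by a
   finite vertex type T, a finite edge type E and endpoint maps src tgt : E -> T;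
   "no loops" is the hypothesis forall e, src e != tgt e. *)
From mathcomp Require Import all_boot all_order all_algebra.
Set Implicit Arguments. Unset Strict Implicit. Unset Printing Implicit Defensive.
Import Order.TTheory GRing.Theory Num.Theory.

Section MG.
Variables (T E : finType) (src tgt : E -> T).

Definition mdeg (v : T) : nat := #|[set e : E | (src e == v) || (tgt e == v)]|.

Definition maxdeg : nat := \max_(v : T) mdeg v.

Definition nedges_in (U : {set T}) : nat :=
  #|[set e : E | (src e \in U) && (tgt e \in U)]|.

Definition sadj (x y : T) : bool :=
  [exists e : E, ((src e == x) && (tgt e == y)) || ((src e == y) && (tgt e == x))].

Definition sdeg_in (U : {set T}) (x : T) : nat := #|[set y in U | sadj x y]|.

(* Gamma(G) = max { 2|E(G[U])| / (|U|-1) : U odd, |U| >= 3 }, as a rational;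
   convention: 0 if there is no such U. *)
Definition Gamma : rat :=
  \big[Order.max/0%R]_(U : {set T} | odd #|U| && (3 <= #|U|))
     (((2 * nedges_in U)%:R / (#|U| - 1)%:R)%R : rat).

End MG.

(* Only the backward direction needs an argument. Given the bound for odd
   sets whose underlying simple graph has minimum degree at least 2, prove
   2|E(G[U])| <= k(|U|-1) for every odd U by induction on |U|. If some x in U
   has at most one simple neighbour y in U, every edge of G[U] meeting x also
   meets y, so deleting x and y loses at most deg(y) <= k edges while |U|-1
   drops by 2; the odd set U - x - y satisfies the bound by induction. *)
From mathcomp Require Import all_boot all_order all_algebra.
From mathcomp Require Import zify.
Import Order.TTheory GRing.Theory Num.Theory.

Lemma ler_ratio_nat_int (m n : nat) (k : int) : 0 < n ->
  ((m%:R / n%:R : rat) <= k%:~R)%R = (m%:Z <= k * n%:Z)%R.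
Proof.
move=> n_gt0; rewrite ler_pdivrMr ?ltr0n // -(ler_int rat).
by rewrite rmorphM /= -!pmulrn.
Qed.

Section OddSetDensity.
Variables (T E : finType) (src tgt : E -> T).
Hypothesis noloop : forall e : E, src e != tgt e.

Lemma Gamma_le_int (k : int) : (0 <= k)%R ->
  (Gamma src tgt <= k%:~R)%R <->
  (forall U : {set T}, odd #|U| -> 3 <= #|U| ->
     (((2 * nedges_in src tgt U)%N)%:Z <= k * ((#|U| - 1)%N)%:Z)%R).
Proof.
move=> k_ge0; split=> [GammaK U oddU U_ge3 | boundU].
  rewrite -ler_ratio_nat_int ?subn_gt0 ?(leq_trans _ U_ge3) //.
  apply: le_trans GammaK; rewrite /Gamma.
  by apply: (@le_bigmax_cond _ _ _ 0%R U (fun U0 : {set T} => odd #|U0| && (3 <= #|U0|)));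
    rewrite oddU U_ge3.
apply: bigmax_le => [|U /andP[oddU U_ge3]]; first by rewrite ler0z.
by rewrite ler_ratio_nat_int ?subn_gt0 ?(leq_trans _ U_ge3) // boundU.
Qed.

Lemma nedges_in_card_le1 (U : {set T}) : #|U| <= 1 -> nedges_in src tgt U = 0.
Proof.
move=> U_le1; apply/eqP; rewrite cards_eq0; apply/eqP/setP => e.
rewrite !inE; apply/negbTE/negP => /andP[srcU tgtU].
have : [set src e; tgt e] \subset U.
  by apply/subsetP => z; rewrite !inE => /orP[]/eqP->.
move/subset_leq_card; rewrite cards2 noloop => two_le.
by have := leq_trans two_le U_le1.
Qed.

Lemma sadj_irr (x : T) : ~~ sadj src tgt x x.
Proof.
apply/existsP => -[e]; rewrite orbb => /andP[/eqP srcx /eqP tgtx].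
by move: (noloop e); rewrite srcx tgtx eqxx.
Qed.

Lemma nedges_in_setD2 {U : {set T}} {x y : T} :
  (forall z, z \in U -> z != y -> ~~ sadj src tgt x z) ->
  nedges_in src tgt U <= nedges_in src tgt (U :\ x :\ y) + mdeg src tgt y.
Proof.
move=> only_y; rewrite /nedges_in /mdeg.
apply: leq_trans (leq_card_setU _ _); apply: subset_leq_card.
apply/subsetP => e; rewrite !inE => /andP[srcU tgtU].
case: (eqVneq (src e) y) => [srcy | srcy]; first by rewrite srcy ?eqxx ?orbT.
case: (eqVneq (tgt e) y) => [tgty | tgty]; first by rewrite tgty ?eqxx ?orbT.
case: (eqVneq (src e) x) => [srcx | srcx].
  by case/negP: (only_y _ tgtU tgty); apply/existsP; exists e; rewrite srcx ?eqxx.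
case: (eqVneq (tgt e) x) => [tgtx | tgtx].
  by case/negP: (only_y _ srcU srcy); apply/existsP; exists e; rewrite tgtx ?eqxx ?orbT.
by rewrite srcU tgtU.
Qed.

Lemma sdeg_in_le1_partner {U : {set T}} {x : T} :
  x \in U -> 2 <= #|U| -> sdeg_in src tgt U x <= 1 ->
  exists2 y, y \in U :\ x &
    forall z, z \in U -> z != y -> ~~ sadj src tgt x z.
Proof.
move=> xU U_ge2; rewrite /sdeg_in leq_eqVlt ltnS leqn0 cards_eq0.
case/orP=> [/cards1P[y nbrs] | /eqP nbrs].
  have : y \in [set z in U | sadj src tgt x z] by rewrite nbrs set11.
  rewrite inE => /andP[yU sxy].
  exists y; first by rewrite !inE yU andbT; apply: contraTneq sxy => ->; exact: sadj_irr.
  move=> z zU zy; apply: contra zy => sxz.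
  have : z \in [set z in U | sadj src tgt x z] by rewrite inE zU sxz.
  by rewrite nbrs inE.
have : 0 < #|U :\ x| by move: U_ge2; rewrite (cardsD1 x U) xU; lia.
rewrite card_gt0 => /set0Pn[y yUx]; exists y => // z zU _.
apply/negP => sxz.
have : z \in [set z in U | sadj src tgt x z] by rewrite inE zU.
by rewrite nbrs inE.
Qed.

Lemma odd_set_bound (k : int) :
  ((maxdeg src tgt)%:Z <= k)%R ->
  (forall U : {set T}, odd #|U| -> 3 <= #|U| ->
     (forall x, x \in U -> 2 <= sdeg_in src tgt U x) ->
     (((2 * nedges_in src tgt U)%N)%:Z <= k * ((#|U| - 1)%N)%:Z)%R) ->
  forall U : {set T}, odd #|U| ->
    (((2 * nedges_in src tgt U)%N)%:Z <= k * ((#|U| - 1)%N)%:Z)%R.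
Proof.
move=> maxdegK min_deg2_bound U.
have [n] := ubnP #|U|; elim: n U => // n IH U /ltnSE U_le_n oddU.
have [U_le1 | U_ge2] := leqP #|U| 1.
  rewrite nedges_in_card_le1 // muln0; have -> : (#|U| - 1 = 0)%N by lia.
  by rewrite mulr0.
have U_ge3 : 3 <= #|U| by move: U_ge2 oddU; case: #|U| => [|[|[|]]].
have [/forall_inP deg2 | ] := boolP [forall x in U, 2 <= sdeg_in src tgt U x].
  exact: min_deg2_bound.
rewrite negb_forall_in => /exists_inP[x xU]; rewrite -ltnNge ltnS => deg_le1.
have [y yUx only_y] := sdeg_in_le1_partner xU U_ge2 deg_le1.
have cardU : #|U :\ x :\ y| + 2 = #|U|.
  by move: (cardsD1 x U) (cardsD1 y (U :\ x)); rewrite xU yUx; lia.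
set V := U :\ x :\ y in cardU *.
have oddV : odd #|V| by move: oddU; rewrite -cardU addn2 /= negbK.
have IHV := IH V ltac:(lia) oddV.
have edgesV : nedges_in src tgt U <= nedges_in src tgt V + mdeg src tgt y.
  exact: nedges_in_setD2 only_y.
have deg_y : mdeg src tgt y <= maxdeg src tgt by apply: leq_bigmax.
have -> : (#|U| - 1 = (#|V| - 1) + 2)%N by rewrite -cardU; case: #|V| oddV => // m _; lia.
rewrite PoszD mulrDr; lia.
Qed.

End OddSetDensity.

Theorem lemma5 (T E : finType) (src tgt : E -> T)
    (noloop : forall e : E, src e != tgt e) (k : int)
    (hDelta : ((maxdeg src tgt)%:Z <= k)%R) :
  (Gamma src tgt <= k%:~R)%R <->
  (forall U : {set T}, odd #|U| -> 3 <= #|U| ->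
     (forall x, x \in U -> 2 <= sdeg_in src tgt U x) ->
     (((2 * nedges_in src tgt U)%N)%:Z <= k * ((#|U| - 1)%N)%:Z)%R).
Proof.
have k_ge0 : (0 <= k)%R by apply: le_trans hDelta.
rewrite Gamma_le_int //; split=> [bound U oddU U_ge3 _ | min_deg2_bound U oddU _].
  exact: bound.
exact: odd_set_bound.
Qed.
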